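(* Let $(n_j)_{j\in\mathbb N}$ be a strictly increasing sequence of positive integers and $\omega\in\Sigma$. If $\lim_{j\to\infty}A_{n_j}g(\omega)=0$ and $\lim_{j\to\infty}A_{n_j}f(\omega)$ exists, then $\lim_{j\to\infty}A_{n_j}f(\omega)\in A$. In particular, if $\lim_{n\to\infty}A_ng(\omega)=0$ and $\lim_{n\to\infty}A_nf(\omega)$ exists, then $\lim_{n\to\infty}A_nf(\omega)\in A$.
   Context: Let $T_1,\dots,T_m:[0,1]\to[0,1]$ be $C^1$ maps with $T_i'>0$, $T_i((0,1))\cap T_j((0,1))=\emptyset$ for $i\ne j$, and $\operatorname{diam}(T_{i_1}\circ\cdots\circ T_{i_n}([0,1]))\to0$ uniformly. $\Sigma=\{1,\dots,m\}^{\mathbb N}$ with shift $\sigma$, $\Pi(\omega)=\lim_nT_{\omega_1}\circ\cdots\circ T_{\omega_n}(0)$. Each $T_i$ fixes $x_i=\Pi(i,i,i,\dots)$, with $T_i'(x_i)\le1$ and $0<T_i'(x)<1$ for $x\ne x_i$; $\mathcal I=\{i:T_i'(x_i)=1\}$ is nonempty. $g(\omega)=-\log T'_{\omega_1}(\Pi(\sigma\omega))$, $f:\Sigma\to\mathbb R$ continuous, $A_nF=\frac1n\sum_{i=0}^{n-1}F\circ\sigma^i$, and $A=[\min_{i\in\mathcal I}f(i,i,\dots),\max_{i\in\mathcal I}f(i,i,\dots)]$. *)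

From Stdlib Require Import Reals Lra Lia.
Open Scope R_scope.

(* Symbols: the alphabet {1,...,m} is encoded as {0,...,m-1} (nat below m);
   a point of Sigma is a sequence omega : nat -> nat with omega k < m for all k
   (omega 0 is the first letter omega_1 of the paper). *)
Definition in_Sigma (m : nat) (w : nat -> nat) : Prop := forall k, (w k < m)%nat.

Definition shift (w : nat -> nat) : nat -> nat := fun k => w (S k).
Definition shiftn (k : nat) (w : nat -> nat) : nat -> nat := fun j => w (j + k)%nat.

Definition constseq (i : nat) : nat -> nat := fun _ => i.

Fixpoint ifs_comp (T : nat -> R -> R) (w : nat -> nat) (n : nat) (x : R) : R :=
  match n with
  | O => x
  | S n' => T (w O) (ifs_comp T (shift w) n' x)
  end.

Definition deriv_on01 (h hd : R -> R) : Prop :=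
  forall x, 0 <= x <= 1 -> forall eps, 0 < eps -> exists delta, 0 < delta /\
    forall y, 0 <= y <= 1 -> y <> x -> Rabs (y - x) < delta ->
      Rabs ((h y - h x) / (y - x) - hd x) < eps.

Definition cont_on01 (h : R -> R) : Prop :=
  forall x, 0 <= x <= 1 -> forall eps, 0 < eps -> exists delta, 0 < delta /\
    forall y, 0 <= y <= 1 -> Rabs (y - x) < delta -> Rabs (h y - h x) < eps.

Definition cont_Sigma (m : nat) (F : (nat -> nat) -> R) : Prop :=
  forall w, in_Sigma m w -> forall eps, 0 < eps -> exists N : nat,
    forall w', in_Sigma m w' -> (forall k, (k < N)%nat -> w' k = w k) ->
      Rabs (F w' - F w) < eps.

Fixpoint birk_sum (F : (nat -> nat) -> R) (w : nat -> nat) (n : nat) : R :=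
  match n with
  | O => 0
  | S n' => birk_sum F w n' + F (shiftn n' w)
  end.

Definition avg (n : nat) (F : (nat -> nat) -> R) (w : nat -> nat) : R :=
  / INR n * birk_sum F w n.

Definition gpot (Td : nat -> R -> R) (Pi : (nat -> nat) -> R) (w : nat -> nat) : R :=
  - ln (Td (w O) (Pi (shift w))).

Definition indI (m : nat) (Td : nat -> R -> R) (Pi : (nat -> nat) -> R) (i : nat) : Prop :=
  (i < m)%nat /\ Td i (Pi (constseq i)) = 1.

(* L \in A = [min_{i in I} f(i,i,...), max_{i in I} f(i,i,...)]
   (I is finite and nonempty, so this is min <= L <= max) *)
Definition inA (m : nat) (Td : nat -> R -> R) (Pi : (nat -> nat) -> R)
  (f : (nat -> nat) -> R) (L : R) : Prop :=
  (exists i, indI m Td Pi i /\ f (constseq i) <= L) /\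
  (exists j, indI m Td Pi j /\ L <= f (constseq j)).

(* If [g] is small at [v], then [T'_{v_1}] is close to 1 at [Pi (shift v)]; this
   happens only near the fixed point [x_i] of a neutral branch [i = v_1], and since
   [x_i] lies in the image of no other branch, also [v_2 = v_1].  So along a window
   of [N] consecutive shifts on which [g < delta] the orbit is constant equal to some
   [i] in [I], and there [f] is within [eps] of [f (i,i,...)].  Every other window
   contains a value [g >= delta], so the number of bad times up to [n] is at most
   [N / delta] times the Birkhoff sum of [g >= 0], which is [o(n_j)] by hypothesis.
   Hence [lim A_{n_j} f <= max_I f (i,i,...)]; the lower bound follows from [-f]. *)

From Stdlib Require Import Reals Lra Lia Classical ClassicalEpsilon.
Open Scope R_scope.

Lemma finite_common_bound {A : Type} (le : A -> A -> Prop) (good : A -> Prop)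
  (merge : A -> A -> A) (a0 : A) (P : nat -> Prop) (Q : nat -> A -> Prop) (m : nat) :
  good a0 ->
  (forall x y, good x -> good y ->
     good (merge x y) /\ le x (merge x y) /\ le y (merge x y)) ->
  (forall i x y, Q i x -> le x y -> Q i y) ->
  (forall i, (i < m)%nat -> P i -> exists x, good x /\ Q i x) ->
  exists x, good x /\ forall i, (i < m)%nat -> P i -> Q i x.
Proof.
  intros Ha0 Hmerge Hmono. induction m as [|m IH]; intros Hex.
  - exists a0. split; [exact Ha0 | intros; lia].
  - destruct IH as [x [Hx HQx]]; [intros i Hi; apply Hex; lia|].
    assert (Hy : exists y, good y /\ (P m -> Q m y)).
    { destruct (classic (P m)) as [Pm|nPm].
      - destruct (Hex m (Nat.lt_succ_diag_r m) Pm) as [y [Hy HQy]]. eauto.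
      - exists a0. split; [exact Ha0 | contradiction]. }
    destruct Hy as [y [Hy HQy]].
    destruct (Hmerge x y Hx Hy) as [Hxy [Hxl Hyl]].
    exists (merge x y). split; [exact Hxy|]. intros i Hi HPi.
    destruct (Nat.eq_dec i m) as [->|Hne].
    + exact (Hmono _ _ _ (HQy HPi) Hyl).
    + exact (Hmono _ _ _ (HQx i ltac:(lia) HPi) Hxl).
Qed.

Lemma finite_pos_bound (P : nat -> Prop) (Q : nat -> R -> Prop) (m : nat) :
  (forall i e e', Q i e -> 0 < e' <= e -> Q i e') ->
  (forall i, (i < m)%nat -> P i -> exists e, 0 < e /\ Q i e) ->
  exists e, 0 < e /\ forall i, (i < m)%nat -> P i -> Q i e.
Proof.
  intros Hmono. apply (finite_common_bound (fun e e' => 0 < e' <= e) (Rlt 0) Rmin 1).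
  - lra.
  - intros x y Hx Hy. assert (0 < Rmin x y) by (apply Rmin_glb_lt; lra).
    repeat split; auto using Rmin_l, Rmin_r.
  - exact Hmono.
Qed.

Lemma finite_R_upper_bound (Q : nat -> R -> Prop) (m : nat) :
  (forall i B B', Q i B -> B <= B' -> Q i B') ->
  (forall i, (i < m)%nat -> exists B, Q i B) ->
  exists B, forall i, (i < m)%nat -> Q i B.
Proof.
  intros Hmono Hex.
  destruct (finite_common_bound Rle (fun _ => True) Rmax 0 (fun _ => True) Q m)
    as [B [_ HB]]; eauto.
  - intros x y _ _. auto using Rmax_l, Rmax_r.
  - intros i Hi _. destruct (Hex i Hi) as [B HB]. eauto.
Qed.

Lemma finite_nat_upper_bound (Q : nat -> nat -> Prop) (m : nat) :
  (forall i N N', Q i N -> (N <= N')%nat -> Q i N') ->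
  (forall i, (i < m)%nat -> exists N, Q i N) ->
  exists N, forall i, (i < m)%nat -> Q i N.
Proof.
  intros Hmono Hex.
  destruct (finite_common_bound le (fun _ => True) Nat.max 0%nat (fun _ => True) Q m)
    as [N [_ HN]]; eauto.
  - intros x y _ _. repeat split; lia.
  - intros i Hi _. destruct (Hex i Hi) as [N HN]. eauto.
Qed.

(* Functions on [0,1] are extended to R through [clamp01], so that Stdlib's
   extreme and intermediate value theorems apply to them. *)
Definition clamp01 (x : R) : R := Rmax 0 (Rmin 1 x).

Lemma clamp01_in01 x : 0 <= clamp01 x <= 1.
Proof. unfold clamp01, Rmax, Rmin. repeat destruct Rle_dec; lra. Qed.

Lemma clamp01_id x : 0 <= x <= 1 -> clamp01 x = x.
Proof. intros. unfold clamp01, Rmax, Rmin. repeat destruct Rle_dec; lra. Qed.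

Lemma clamp01_lipschitz x y : Rabs (clamp01 y - clamp01 x) <= Rabs (y - x).
Proof.
  unfold clamp01, Rmax, Rmin. repeat destruct Rle_dec;
  unfold Rabs; repeat destruct Rcase_abs; lra.
Qed.

Section ContinuousOn01.

Variable h : R -> R.
Hypothesis hcont : cont_on01 h.

Lemma continuity_clamp01 : continuity (fun x => h (clamp01 x)).
Proof.
  intros x eps Heps. simpl. unfold R_dist.
  destruct (hcont (clamp01 x) (clamp01_in01 x) eps Heps) as [d [Hd H]].
  exists d; split; [exact Hd|]. intros y [_ Hy].
  apply H; [apply clamp01_in01|]. eapply Rle_lt_trans; [apply clamp01_lipschitz|exact Hy].
Qed.

Lemma cont_on01_min a b : 0 <= a -> a <= b -> b <= 1 ->
  exists y, a <= y <= b /\ forall z, a <= z <= b -> h y <= h z.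
Proof.
  intros Ha Hab Hb.
  destruct (continuity_ab_min (fun x => h (clamp01 x)) a b Hab) as [y [Hmin Hy]].
  { intros c _. apply continuity_clamp01. }
  exists y; split; auto. intros z Hz. specialize (Hmin z Hz).
  rewrite !clamp01_id in Hmin by lra. exact Hmin.
Qed.

Lemma cont_on01_max a b : 0 <= a -> a <= b -> b <= 1 ->
  exists y, a <= y <= b /\ forall z, a <= z <= b -> h z <= h y.
Proof.
  intros Ha Hab Hb.
  destruct (continuity_ab_maj (fun x => h (clamp01 x)) a b Hab) as [y [Hmax Hy]].
  { intros c _. apply continuity_clamp01. }
  exists y; split; auto. intros z Hz. specialize (Hmax z Hz).
  rewrite !clamp01_id in Hmax by lra. exact Hmax.
Qed.

Lemma cont_on01_IVT a b y : 0 <= a -> a <= b -> b <= 1 ->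
  h a <= y <= h b -> exists z, a <= z <= b /\ h z = y.
Proof.
  intros Ha Hab Hb Hy.
  destruct (IVT_cor (fun x => h (clamp01 x) - y) a b) as [z [Hz Hz0]]; auto.
  { apply continuity_minus; [apply continuity_clamp01 | apply continuity_const; intros ? ?; auto]. }
  { rewrite !clamp01_id by lra. nra. }
  exists z; split; auto. rewrite clamp01_id in Hz0 by lra. lra.
Qed.

Lemma cont_on01_lt_uniform a b M : 0 <= a -> b <= 1 ->
  (forall y, a <= y <= b -> h y < M) ->
  exists e, 0 < e /\ forall y, a <= y <= b -> h y <= M - e.
Proof.
  intros Ha Hb Hlt. destruct (Rle_dec a b) as [Hab|Hba].
  - destruct (cont_on01_max a b Ha Hab Hb) as [y0 [Hy0 Hmax]].
    exists (M - h y0). split; [specialize (Hlt y0 Hy0); lra|].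
    intros y Hy. specialize (Hmax y Hy). lra.
  - exists 1. split; [lra|]. intros; lra.
Qed.

Lemma cont_on01_seq (u : nat -> R) l : (forall n, 0 <= u n <= 1) -> 0 <= l <= 1 ->
  Un_cv u l -> Un_cv (fun n => h (u n)) (h l).
Proof.
  intros Hu Hl Hcv eps Heps.
  destruct (hcont l Hl eps Heps) as [d [Hd H]].
  destruct (Hcv d Hd) as [N HN]. exists N. intros n Hn.
  apply H; auto. apply HN; auto.
Qed.

End ContinuousOn01.

Section DerivativeOn01.

Variables h hd : R -> R.
Hypothesis hder : deriv_on01 h hd.

Lemma deriv_on01_cont : cont_on01 h.
Proof.
  intros x Hx eps Heps.
  destruct (hder x Hx 1 ltac:(lra)) as [d1 [Hd1 H1]].
  set (K := Rabs (hd x) + 1).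
  assert (HK : 0 < K) by (unfold K; pose proof (Rabs_pos (hd x)); lra).
  exists (Rmin d1 (eps / K)). split.
  { apply Rmin_glb_lt; auto. apply Rdiv_lt_0_compat; auto. }
  intros y Hy Hyx.
  destruct (Req_dec y x) as [->|Hne]; [rewrite Rminus_diag, Rabs_R0; auto|].
  assert (Hy1 : Rabs (y - x) < d1) by (eapply Rlt_le_trans; [exact Hyx| apply Rmin_l]).
  assert (Hy2 : Rabs (y - x) * K < eps).
  { apply (Rmult_lt_compat_r K) in Hyx; auto.
    eapply Rlt_le_trans; [exact Hyx|].
    apply (Rle_trans _ (eps / K * K)); [apply Rmult_le_compat_r; [lra| apply Rmin_r]|].
    right. field. lra. }
  specialize (H1 y Hy Hne Hy1).
  set (q := (h y - h x) / (y - x)) in *.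
  assert (Hq : h y - h x = q * (y - x)) by (unfold q; field; lra).
  assert (Rabs q < K).
  { unfold K. replace q with ((q - hd x) + hd x) by ring.
    eapply Rle_lt_trans; [apply Rabs_triang|]. lra. }
  rewrite Hq, Rabs_mult.
  pose proof (Rabs_pos (y - x)). pose proof (Rabs_pos q). nra.
Qed.

Lemma deriv_on01_pos_left c x : 0 <= x < c -> c <= 1 -> 0 < hd c ->
  exists s, x <= s < c /\ h s < h c.
Proof.
  intros Hx Hc Hpos.
  destruct (hder c ltac:(lra) (hd c / 2) ltac:(lra)) as [d [Hd H]].
  set (r := Rmin d (c - x) / 2).
  assert (Hr : 0 < r <= d / 2 /\ r <= (c - x) / 2).
  { pose proof (Rmin_l d (c - x)). pose proof (Rmin_r d (c - x)).
    assert (0 < Rmin d (c - x)) by (apply Rmin_glb_lt; lra). unfold r; lra. }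
  exists (c - r). split; [lra|].
  specialize (H (c - r) ltac:(lra) ltac:(lra)
                ltac:(rewrite Rabs_left by lra; lra)).
  assert (Hq : (h (c - r) - h c) / (c - r - c) > 0).
  { apply Rabs_def2 in H. lra. }
  replace (c - r - c) with (- r) in Hq by ring.
  assert (Hq' : (h (c - r) - h c) / (- r) * r > 0) by (apply Rmult_gt_0_compat; lra).
  replace ((h (c - r) - h c) / (- r) * r) with (h c - h (c - r)) in Hq' by (field; lra).
  lra.
Qed.

Hypothesis hpos : forall x, 0 <= x <= 1 -> 0 < hd x.

(* The minimum of [h] on [[x, y]] cannot lie to the right of [x], since [h]
   decreases to the left of any point. *)
Lemma deriv_on01_increasing x y : 0 <= x -> x < y -> y <= 1 -> h x < h y.
Proof.
  intros Hx Hxy Hy.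
  destruct (cont_on01_min h deriv_on01_cont x y Hx ltac:(lra) Hy) as [c [Hc Hmin]].
  assert (Hcx : c = x).
  { destruct (Req_dec c x) as [|Hne]; auto. exfalso.
    destruct (deriv_on01_pos_left c x ltac:(lra) ltac:(lra) (hpos c ltac:(lra)))
      as [s [Hs Hhs]].
    specialize (Hmin s ltac:(lra)). lra. }
  subst c.
  destruct (deriv_on01_pos_left y x ltac:(lra) Hy (hpos y ltac:(lra))) as [s [Hs Hhs]].
  specialize (Hmin s ltac:(lra)). lra.
Qed.

End DerivativeOn01.

Lemma interval_gap a b p : 0 <= a -> a < b -> b <= 1 -> a <= p <= b ->
  (0 < p -> a < p) -> (p < 1 -> p < b) ->
  exists eta, 0 < eta /\ forall c d y, 0 <= c -> c < d -> d <= 1 ->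
    (d <= a \/ b <= c) -> c <= y <= d -> eta <= Rabs (y - p).
Proof.
  intros Ha Hab Hb Hp Hleft Hright.
  set (el := if Rlt_dec a p then p - a else 1).
  set (er := if Rlt_dec p b then b - p else 1).
  assert (Hel : 0 < el) by (unfold el; destruct (Rlt_dec a p); lra).
  assert (Her : 0 < er) by (unfold er; destruct (Rlt_dec p b); lra).
  exists (Rmin el er). split; [apply Rmin_glb_lt; auto|].
  intros c d y Hc Hcd Hd [Hda|Hbc] Hy.
  - destruct (Rlt_dec a p) as [Hap|Hap].
    + apply (Rle_trans _ el); [apply Rmin_l|].
      unfold el; destruct (Rlt_dec a p); [|lra]. rewrite Rabs_left1 by lra. lra.
    + exfalso. destruct (Rlt_dec 0 p) as [Hp0|Hp0]; [exact (Hap (Hleft Hp0)) | lra].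
  - destruct (Rlt_dec p b) as [Hpb|Hpb].
    + apply (Rle_trans _ er); [apply Rmin_r|].
      unfold er; destruct (Rlt_dec p b); [|lra]. rewrite Rabs_right by lra. lra.
    + exfalso. destruct (Rlt_dec p 1) as [Hp1|Hp1]; [exact (Hpb (Hright Hp1)) | lra].
Qed.

Lemma ln_le_compat x y : 0 < x -> x <= y -> ln x <= ln y.
Proof.
  intros Hx [Hxy| ->]; [left; apply ln_increasing; auto | right; reflexivity].
Qed.

Lemma Un_cv_const (c : R) : Un_cv (fun _ => c) c.
Proof. intros eps Heps. exists 0%nat. intros n _. unfold R_dist. rewrite Rminus_diag, Rabs_R0. exact Heps. Qed.

Lemma Un_cv_succ (u : nat -> R) l : Un_cv u l -> Un_cv (fun n => u (S n)) l.
Proof. intros H eps Heps. destruct (H eps Heps) as [N HN]. exists N. intros n Hn. apply HN. lia. Qed.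

Lemma Un_cv_in01 (u : nat -> R) l : (forall n, 0 <= u n <= 1) -> Un_cv u l -> 0 <= l <= 1.
Proof.
  intros Hu Hcv. split.
  - apply (@Rle_cv_lim (fun _ => 0) u); [apply Hu | apply Un_cv_const | exact Hcv].
  - apply (@Rle_cv_lim u (fun _ => 1)); [apply Hu | exact Hcv | apply Un_cv_const].
Qed.

Lemma limit_le_of_affine_bound (u v : nat -> R) (nj : nat -> nat) c K1 K2 L :
  (forall j, (nj j < nj (S j))%nat) ->
  (forall j, u j <= c + K1 * v j + K2 / INR (nj j)) ->
  Un_cv u L -> Un_cv v 0 -> L <= c.
Proof.
  intros Hinc Hle Hu Hv.
  assert (Hnj : forall j, (j <= nj j)%nat).
  { induction j as [|j IH]; [lia | specialize (Hinc j); lia]. }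
  assert (Hinfty : cv_infty (fun j => INR (nj j))).
  { intros M. destruct (INR_unbounded M) as [N HN]. exists N. intros n Hn.
    apply (Rlt_le_trans _ (INR N)); [lra | apply le_INR; specialize (Hnj n); lia]. }
  assert (Hcv : Un_cv (fun j => c + K1 * v j + K2 / INR (nj j)) (c + K1 * 0 + K2 * 0)).
  { apply CV_plus; [apply CV_plus; [apply Un_cv_const | apply CV_mult; [apply Un_cv_const | exact Hv]]|].
    apply CV_mult; [apply Un_cv_const | exact (cv_infty_cv_0 _ Hinfty)]. }
  replace c with (c + K1 * 0 + K2 * 0) by ring.
  exact (Rle_cv_lim Hle Hu Hcv).
Qed.

Fixpoint psum (a : nat -> R) (n : nat) : R :=
  match n with O => 0 | S n => psum a n + a n end.

Lemma birk_sum_psum F w n : birk_sum F w n = psum (fun k => F (shiftn k w)) n.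
Proof. induction n as [|n IH]; simpl; [reflexivity | rewrite IH; reflexivity]. Qed.

Lemma psum_le a b n : (forall k, (k < n)%nat -> a k <= b k) -> psum a n <= psum b n.
Proof.
  induction n as [|n IH]; simpl; intros H; [lra|].
  pose proof (H n ltac:(lia)). pose proof (IH ltac:(intros; apply H; lia)). lra.
Qed.

Lemma psum_add a b n : psum (fun k => a k + b k) n = psum a n + psum b n.
Proof. induction n as [|n IH]; simpl; [lra | rewrite IH; lra]. Qed.

Lemma psum_scal c a n : psum (fun k => c * a k) n = c * psum a n.
Proof. induction n as [|n IH]; simpl; [lra | rewrite IH; lra]. Qed.

Lemma psum_const c n : psum (fun _ => c) n = INR n * c.
Proof. induction n as [|n IH]; simpl psum; [simpl; lra | rewrite IH, S_INR; lra]. Qed.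

Lemma psum_nonneg b n : (forall k, 0 <= b k) -> 0 <= psum b n.
Proof. intros H. induction n as [|n IH]; simpl; [lra | pose proof (H n); lra]. Qed.

Lemma psum_shift b n t : psum b (n + t) = psum b t + psum (fun k => b (k + t)%nat) n.
Proof. induction n as [|n IH]; simpl; [lra | rewrite IH; lra]. Qed.

Lemma psum_mono b n n' : (forall k, 0 <= b k) -> (n <= n')%nat -> psum b n <= psum b n'.
Proof.
  intros H Hn. replace n' with ((n' - n) + n)%nat by lia. rewrite psum_shift.
  pose proof (psum_nonneg (fun k => b (k + n)%nat) (n' - n) ltac:(intros; apply H)). lra.
Qed.

Lemma psum_term_le b n t : (forall k, 0 <= b k) -> (t < n)%nat -> b t <= psum b n.
Proof.
  intros H Ht. induction n as [|n IH]; [lia|]. simpl.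
  pose proof (psum_nonneg b n H). pose proof (H n).
  destruct (Nat.eq_dec t n) as [->|Hne]; [lra|]. pose proof (IH ltac:(lia)). lra.
Qed.

(* Each [b k] lies in at most [N] of the windows [[k', k' + N)]. *)
Lemma psum_windows_le b n N : (forall k, 0 <= b k) ->
  psum (fun k => psum (fun t => b (k + t)%nat) N) n <= INR N * psum b (n + N).
Proof.
  intros H. induction N as [|N IH]; [simpl; rewrite (psum_const 0 n); lra|].
  simpl psum at 1. rewrite psum_add, S_INR.
  assert (H1 : psum b (n + N) <= psum b (n + S N)) by (apply psum_mono; auto; lia).
  assert (H2 : psum (fun k => b (k + N)%nat) n <= psum b (n + S N)).
  { pose proof (psum_shift b n N). pose proof (psum_nonneg b N H). lra. }
  pose proof (pos_INR N).
  assert (INR N * psum b (n + N) <= INR N * psum b (n + S N)) by (apply Rmult_le_compat_l; lra).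
  lra.
Qed.

(* A window of length [N] containing a value of [b] at least [delta] contributes
   at least [delta] to the windowed sum of [b]; this pays for [a k <= B]. *)
Lemma psum_window_bound (a b : nat -> R) B c G delta N :
  0 < delta -> c <= B -> (forall k, 0 <= b k <= G) -> (forall k, a k <= B) ->
  (forall k, (forall t, (t < N)%nat -> b (k + t)%nat < delta) -> a k <= c) ->
  forall n, psum a n <= INR n * c + (B - c) / delta * (INR N * (psum b n + INR N * G)).
Proof.
  intros Hd HcB Hb Ha Hgood n.
  set (K := (B - c) / delta).
  assert (HK : 0 <= K) by (unfold K; apply Rmult_le_pos; [lra | left; apply Rinv_0_lt_compat; lra]).
  assert (Hb0 : forall k, 0 <= b k) by (intros k; apply Hb).
  assert (Hpt : forall k, a k <= c + K * psum (fun t => b (k + t)%nat) N).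
  { intros k. pose proof (psum_nonneg (fun t => b (k + t)%nat) N ltac:(intros; apply Hb0)).
    destruct (classic (forall t, (t < N)%nat -> b (k + t)%nat < delta)) as [Hsmall|Hbig].
    - pose proof (Hgood k Hsmall).
      assert (0 <= K * psum (fun t => b (k + t)%nat) N) by (apply Rmult_le_pos; auto). lra.
    - apply not_all_ex_not in Hbig. destruct Hbig as [t Ht].
      apply imply_to_and in Ht. destruct Ht as [HtN Ht]. apply Rnot_lt_le in Ht.
      pose proof (psum_term_le (fun t => b (k + t)%nat) N t ltac:(intros; apply Hb0) HtN).
      assert (K * delta <= K * psum (fun t => b (k + t)%nat) N) by (apply Rmult_le_compat_l; lra).
      assert (K * delta = B - c) by (unfold K; field; lra).
      pose proof (Ha k). lra. }
  eapply Rle_trans; [apply psum_le; intros k _; apply Hpt|].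
  rewrite psum_add, psum_const, psum_scal.
  pose proof (psum_windows_le b n N Hb0) as Hwin.
  rewrite Nat.add_comm, psum_shift in Hwin.
  pose proof (psum_le (fun k => b (k + n)%nat) (fun _ => G) N ltac:(intros; apply Hb)) as Htail.
  rewrite psum_const in Htail.
  pose proof (pos_INR N).
  assert (INR N * psum (fun k => b (k + n)%nat) N <= INR N * (INR N * G))
    by (apply Rmult_le_compat_l; lra).
  assert (K * psum (fun k => psum (fun t => b (k + t)%nat) N) n
          <= K * (INR N * (psum b n + INR N * G))) by (apply Rmult_le_compat_l; lra).
  lra.
Qed.

Lemma in_Sigma_shift m w : in_Sigma m w -> in_Sigma m (shift w).
Proof. intros H k. apply H. Qed.

Lemma in_Sigma_shiftn m k w : in_Sigma m w -> in_Sigma m (shiftn k w).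
Proof. intros H j. apply H. Qed.

Lemma in_Sigma_constseq m i : (i < m)%nat -> in_Sigma m (constseq i).
Proof. intros H k. exact H. Qed.

Section SymbolicSpace.

Variable m : nat.
Variable f : (nat -> nat) -> R.
Hypothesis hf : cont_Sigma m f.

Definition unbounded_on_cylinder (n : nat) (u : nat -> nat) : Prop :=
  forall B, exists v, in_Sigma m v /\ (forall k, (k < n)%nat -> v k = u k) /\ B < f v.

Definition prefix_extend (u : nat -> nat) (n a : nat) : nat -> nat :=
  fun k => if Nat.ltb k n then u k else a.

Lemma unbounded_on_cylinder_extend n u : unbounded_on_cylinder n u ->
  exists a, (a < m)%nat /\ unbounded_on_cylinder (S n) (prefix_extend u n a).
Proof.
  intros HU. apply NNPP. intros Hno.
  destruct (finite_R_upper_bound (fun a B => forall v, in_Sigma m v ->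
     (forall k, (k < S n)%nat -> v k = prefix_extend u n a k) -> f v <= B) m) as [B HB].
  - intros a B B' H HBB' v Hv Hk. specialize (H v Hv Hk). lra.
  - intros a Ha. apply NNPP. intros Hn. apply Hno. exists a. split; auto.
    intros B. apply NNPP. intros Hn2. apply Hn. exists B. intros v Hv Hk.
    apply Rnot_lt_le. intros Hlt. apply Hn2. eauto.
  - destruct (HU B) as [v [Hv [Hk Hfv]]].
    enough (f v <= B) by lra.
    apply (HB (v n) (Hv n) v Hv). intros k Hkn. unfold prefix_extend.
    destruct (Nat.ltb_spec k n); [apply Hk; auto | f_equal; lia].
Qed.

(* König's lemma: if [f] were unbounded, choosing letter by letter an unbounded
   cylinder produces a point at which [f] is not continuous. *)
Lemma cont_Sigma_bounded : exists B, forall v, in_Sigma m v -> f v <= B.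
Proof.
  apply NNPP. intros Hno.
  assert (Hstep : forall n u, {a | unbounded_on_cylinder n u ->
     (a < m)%nat /\ unbounded_on_cylinder (S n) (prefix_extend u n a)}).
  { intros n u. apply constructive_indefinite_description.
    destruct (classic (unbounded_on_cylinder n u)) as [H|H].
    - destruct (unbounded_on_cylinder_extend n u H) as [a Ha]. eauto.
    - exists 0%nat. contradiction. }
  set (W := fix W n := match n with
    | O => fun _ : nat => 0%nat
    | S n => prefix_extend (W n) n (proj1_sig (Hstep n (W n))) end).
  assert (HW : forall n, unbounded_on_cylinder n (W n)).
  { induction n as [|n IH].
    - intros B. apply NNPP. intros Hn. apply Hno. exists B. intros v Hv.
      apply Rnot_lt_le. intros Hlt. apply Hn. exists v. repeat split; auto. lia.
    - exact (proj2 (proj2_sig (Hstep n (W n)) IH)). }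
  set (ws := fun k => W (S k) k).
  assert (Hws : forall n k, (k < n)%nat -> W n k = ws k).
  { induction n as [|n IH]; intros k Hk; [lia|].
    unfold ws. simpl. unfold prefix_extend.
    destruct (Nat.ltb_spec k n) as [Hkn|Hkn].
    - rewrite IH by exact Hkn. unfold ws. simpl. unfold prefix_extend.
      rewrite Nat.ltb_irrefl. reflexivity.
    - assert (k = n) by lia. subst k. rewrite Nat.ltb_irrefl. reflexivity. }
  assert (Hin : in_Sigma m ws).
  { intros k. unfold ws. simpl. unfold prefix_extend. rewrite Nat.ltb_irrefl.
    exact (proj1 (proj2_sig (Hstep k (W k)) (HW k))). }
  destruct (hf ws Hin 1 ltac:(lra)) as [N HN].
  destruct (HW N (f ws + 1)) as [v [Hv [Hk Hfv]]].
  assert (Hclose : Rabs (f v - f ws) < 1).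
  { apply HN; auto. intros k Hkn. rewrite Hk by exact Hkn. apply Hws, Hkn. }
  apply Rabs_def2 in Hclose. lra.
Qed.

Lemma cont_Sigma_uniform_at_constseq eps : 0 < eps -> exists N, forall i v, (i < m)%nat ->
  in_Sigma m v -> (forall k, (k < N)%nat -> v k = i) -> Rabs (f v - f (constseq i)) < eps.
Proof.
  intros Heps.
  destruct (finite_nat_upper_bound (fun i N => forall v, in_Sigma m v ->
      (forall k, (k < N)%nat -> v k = i) -> Rabs (f v - f (constseq i)) < eps) m) as [N HN].
  - intros i N N' H HNN' v Hv Hk. apply H; auto. intros k Hk'. apply Hk. lia.
  - intros i Hi. destruct (hf (constseq i) (in_Sigma_constseq m i Hi) eps Heps) as [N HN].
    eauto.
  - exists N. intros i v Hi. apply HN, Hi.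
Qed.

End SymbolicSpace.

Section IFS.

Variable m : nat.
Variables T Td : nat -> R -> R.
Variable Pi : (nat -> nat) -> R.
Hypothesis hmaps : forall i, (i < m)%nat -> forall x, 0 <= x <= 1 -> 0 <= T i x <= 1.
Hypothesis hderiv : forall i, (i < m)%nat -> deriv_on01 (T i) (Td i).
Hypothesis hC1 : forall i, (i < m)%nat -> cont_on01 (Td i).
Hypothesis hpos : forall i, (i < m)%nat -> forall x, 0 <= x <= 1 -> 0 < Td i x.
Hypothesis hdisj : forall i j, (i < m)%nat -> (j < m)%nat -> i <> j ->
  forall x y, 0 < x < 1 -> 0 < y < 1 -> T i x <> T j y.
Hypothesis hPi : forall w, in_Sigma m w -> Un_cv (fun n => ifs_comp T w n 0) (Pi w).
Hypothesis hfix : forall i, (i < m)%nat -> T i (Pi (constseq i)) = Pi (constseq i).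
Hypothesis hle1 : forall i, (i < m)%nat -> Td i (Pi (constseq i)) <= 1.
Hypothesis hlt1 : forall i, (i < m)%nat -> forall x, 0 <= x <= 1 ->
  x <> Pi (constseq i) -> 0 < Td i x < 1.

Local Notation fixpt i := (Pi (constseq i)).
Local Notation I := (indI m Td Pi).

Lemma T_cont i : (i < m)%nat -> cont_on01 (T i).
Proof. intros Hi. exact (deriv_on01_cont _ _ (hderiv i Hi)). Qed.

Lemma T_increasing i x y : (i < m)%nat -> 0 <= x -> x < y -> y <= 1 -> T i x < T i y.
Proof. intros Hi. exact (deriv_on01_increasing _ _ (hderiv i Hi) (hpos i Hi) x y). Qed.

Lemma T_monotone i x y : (i < m)%nat -> 0 <= x -> x <= y -> y <= 1 -> T i x <= T i y.
Proof.
  intros Hi Hx [Hxy| ->] Hy; [left; apply T_increasing | right]; auto.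
Qed.

Lemma T_open_image i y : (i < m)%nat -> T i 0 < y < T i 1 ->
  exists x, 0 < x < 1 /\ T i x = y.
Proof.
  intros Hi Hy.
  destruct (cont_on01_IVT (T i) (T_cont i Hi) 0 1 y) as [x [Hx Hxy]]; try lra.
  exists x. split; auto. split.
  - destruct (Req_dec x 0) as [->|]; lra.
  - destruct (Req_dec x 1) as [->|]; lra.
Qed.

Lemma T_images_separated i j : (i < m)%nat -> (j < m)%nat -> i <> j ->
  T j 1 <= T i 0 \/ T i 1 <= T j 0.
Proof.
  intros Hi Hj Hij.
  destruct (Rle_dec (T j 1) (T i 0)) as [|Hji]; [left; auto|].
  destruct (Rle_dec (T i 1) (T j 0)) as [|Hij']; [right; auto|]. exfalso.
  pose proof (T_increasing i 0 1 Hi ltac:(lra) ltac:(lra) ltac:(lra)).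
  pose proof (T_increasing j 0 1 Hj ltac:(lra) ltac:(lra) ltac:(lra)).
  set (y := (Rmax (T i 0) (T j 0) + Rmin (T i 1) (T j 1)) / 2).
  assert (Hy : Rmax (T i 0) (T j 0) < y < Rmin (T i 1) (T j 1)).
  { unfold y, Rmax, Rmin. repeat destruct Rle_dec; lra. }
  pose proof (Rmax_l (T i 0) (T j 0)). pose proof (Rmax_r (T i 0) (T j 0)).
  pose proof (Rmin_l (T i 1) (T j 1)). pose proof (Rmin_r (T i 1) (T j 1)).
  destruct (T_open_image i y Hi ltac:(lra)) as [x [Hx Hxy]].
  destruct (T_open_image j y Hj ltac:(lra)) as [x' [Hx' Hxy']].
  apply (hdisj i j Hi Hj Hij x x' Hx Hx'). congruence.
Qed.

Lemma fixed_point_isolated i p : (i < m)%nat -> 0 <= p <= 1 -> T i p = p ->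
  exists eta, 0 < eta /\ forall j z, (j < m)%nat -> 0 <= z <= 1 ->
    Rabs (T j z - p) < eta -> j = i.
Proof.
  intros Hi Hp Hfixp.
  pose proof (hmaps i Hi 0 ltac:(lra)). pose proof (hmaps i Hi 1 ltac:(lra)).
  destruct (interval_gap (T i 0) (T i 1) p) as [eta [Heta Hgap]].
  - lra.
  - apply T_increasing; auto; lra.
  - lra.
  - split; rewrite <- Hfixp; apply T_monotone; auto; lra.
  - intros Hp0. rewrite <- Hfixp. apply T_increasing; auto; lra.
  - intros Hp1. rewrite <- Hfixp. apply T_increasing; auto; lra.
  - exists eta. split; auto. intros j z Hj Hz Hclose.
    destruct (Nat.eq_dec j i) as [|Hji]; auto. exfalso.
    pose proof (hmaps j Hj 0 ltac:(lra)). pose proof (hmaps j Hj 1 ltac:(lra)).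
    assert (Hgapj := Hgap (T j 0) (T j 1) (T j z) ltac:(lra)
      ltac:(apply T_increasing; auto; lra) ltac:(lra)
      (T_images_separated i j Hi Hj (not_eq_sym Hji))
      ltac:(split; apply T_monotone; auto; lra)).
    lra.
Qed.

Lemma ifs_comp_in01 n w x : in_Sigma m w -> 0 <= x <= 1 -> 0 <= ifs_comp T w n x <= 1.
Proof.
  revert w. induction n as [|n IH]; intros w Hw Hx; simpl; auto.
  apply hmaps; [apply Hw|]. apply IH; [apply in_Sigma_shift|]; assumption.
Qed.

Lemma Pi_in01 w : in_Sigma m w -> 0 <= Pi w <= 1.
Proof.
  intros Hw. apply (Un_cv_in01 _ _ (fun n => ifs_comp_in01 n w 0 Hw ltac:(lra)) (hPi w Hw)).
Qed.

Lemma Pi_shift w : in_Sigma m w -> Pi w = T (w O) (Pi (shift w)).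
Proof.
  intros Hw. assert (Hs : in_Sigma m (shift w)) by (apply in_Sigma_shift, Hw).
  apply (UL_sequence (fun n => ifs_comp T w (S n) 0)).
  - exact (Un_cv_succ _ _ (hPi w Hw)).
  - apply (cont_on01_seq (T (w O)) (T_cont _ (Hw O))).
    + intros n. apply ifs_comp_in01; auto; lra.
    + apply Pi_in01, Hs.
    + apply hPi, Hs.
Qed.

Lemma fixpt_in01 i : (i < m)%nat -> 0 <= fixpt i <= 1.
Proof. intros Hi. apply Pi_in01, in_Sigma_constseq, Hi. Qed.

Lemma fixpts_isolated : exists eta, 0 < eta /\ forall i j z, (i < m)%nat -> (j < m)%nat ->
  0 <= z <= 1 -> Rabs (T j z - fixpt i) < eta -> j = i.
Proof.
  destruct (finite_pos_bound (fun _ => True) (fun i eta => forall j z, (j < m)%nat ->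
     0 <= z <= 1 -> Rabs (T j z - fixpt i) < eta -> j = i) m) as [eta [Heta Hiso]].
  - intros i e e' H He' j z Hj Hz Hlt. apply (H j z Hj Hz). lra.
  - intros i Hi _. apply fixed_point_isolated; auto. apply fixpt_in01, Hi.
  - exists eta. split; auto. intros i j z Hi Hj. apply Hiso; auto.
Qed.

Lemma Td_le1 i y : (i < m)%nat -> 0 <= y <= 1 -> Td i y <= 1.
Proof.
  intros Hi Hy. destruct (Req_dec y (fixpt i)) as [->|Hne]; [apply hle1, Hi|].
  pose proof (hlt1 i Hi y Hy Hne). lra.
Qed.

Lemma Td_near_one eta : 0 < eta -> exists e, 0 < e /\ forall i y, (i < m)%nat ->
  0 <= y <= 1 -> 1 - e < Td i y -> I i /\ Rabs (y - fixpt i) < eta.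
Proof.
  intros Heta.
  destruct (finite_pos_bound (fun _ => True) (fun i e => forall y, 0 <= y <= 1 ->
     1 - e < Td i y -> I i /\ Rabs (y - fixpt i) < eta) m) as [e [He Hnear]].
  - intros i e e' H He' y Hy Hlt. apply (H y Hy). lra.
  - intros i Hi _. pose proof (fixpt_in01 i Hi) as Hp.
    destruct (classic (I i)) as [HI|HnI].
    + assert (Hoff : forall a b, 0 <= a -> b <= 1 -> (b < fixpt i \/ fixpt i < a) ->
          exists e, 0 < e /\ forall y, a <= y <= b -> Td i y <= 1 - e).
      { intros a b Ha Hb Hab. apply (cont_on01_lt_uniform _ (hC1 i Hi) a b 1 Ha Hb).
        intros y Hy. apply hlt1; auto; lra. }
      destruct (Hoff 0 (fixpt i - eta)) as [e1 [He1 H1]]; [lra | lra | lra |].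
      destruct (Hoff (fixpt i + eta) 1) as [e2 [He2 H2]]; [lra | lra | lra |].
      exists (Rmin e1 e2). split; [apply Rmin_glb_lt; auto|].
      pose proof (Rmin_l e1 e2). pose proof (Rmin_r e1 e2).
      intros y Hy Hlt. split; auto.
      destruct (Rlt_dec (Rabs (y - fixpt i)) eta) as [|Hfar]; auto. exfalso.
      destruct (Rle_dec y (fixpt i - eta)).
      * specialize (H1 y ltac:(lra)). lra.
      * assert (fixpt i + eta <= y) by (unfold Rabs in Hfar; destruct Rcase_abs; lra).
        specialize (H2 y ltac:(lra)). lra.
    + destruct (cont_on01_lt_uniform _ (hC1 i Hi) 0 1 1) as [e [He H]]; [lra | lra | |].
      { intros y Hy. pose proof (Td_le1 i y Hi Hy).
        destruct (Req_dec (Td i y) 1) as [Heq|]; [|lra]. exfalso. apply HnI.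
        split; auto. destruct (Req_dec y (fixpt i)) as [<-|Hne]; auto.
        pose proof (hlt1 i Hi y Hy Hne). lra. }
      exists e. split; auto. intros y Hy Hlt. specialize (H y Hy). lra.
  - exists e. split; auto.
Qed.

(* [Td] close to 1 puts [Pi (shift v)] near the fixed point of [T (v O)], which no
   other branch can reach. *)
Lemma gpot_small : exists delta, 0 < delta /\ forall v, in_Sigma m v ->
  gpot Td Pi v < delta -> I (v O) /\ v 1%nat = v O.
Proof.
  destruct fixpts_isolated as [eta [Heta Hiso]].
  destruct (Td_near_one eta Heta) as [e [He Hnear]].
  set (e' := Rmin e (1 / 2)).
  assert (He' : 0 < e' <= 1 / 2 /\ e' <= e).
  { unfold e'. split; [split; [apply Rmin_glb_lt; lra | apply Rmin_r] | apply Rmin_l]. }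
  exists (- ln (1 - e')). split.
  { assert (ln (1 - e') < ln 1) by (apply ln_increasing; lra). rewrite ln_1 in H. lra. }
  intros v Hv Hg. unfold gpot in Hg.
  assert (Hsv : in_Sigma m (shift v)) by (apply in_Sigma_shift, Hv).
  assert (Hy : 0 <= Pi (shift v) <= 1) by (apply Pi_in01, Hsv).
  assert (Hclose : 1 - e < Td (v O) (Pi (shift v))).
  { enough (1 - e' < Td (v O) (Pi (shift v))) by lra.
    apply ln_lt_inv; [lra | apply hpos; auto | lra]. }
  destruct (Hnear (v O) _ (Hv O) Hy Hclose) as [HI Hnearp].
  split; auto.
  rewrite (Pi_shift _ Hsv) in Hnearp.
  apply (Hiso (v O) (shift v O) (Pi (shift (shift v))) (Hv O) (Hsv O)); auto.
  apply Pi_in01, in_Sigma_shift, Hsv.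
Qed.

Lemma gpot_bounded : exists G, forall v, in_Sigma m v -> 0 <= gpot Td Pi v <= G.
Proof.
  destruct (finite_pos_bound (fun _ => True)
    (fun i c => forall y, 0 <= y <= 1 -> c <= Td i y) m) as [c [Hc Hmin]].
  - intros i c c' H Hc' y Hy. specialize (H y Hy). lra.
  - intros i Hi _. destruct (cont_on01_min (Td i) (hC1 i Hi) 0 1) as [y0 [Hy0 H]]; try lra.
    exists (Td i y0). split; auto.
  - exists (- ln c). intros v Hv. unfold gpot.
    assert (Hy : 0 <= Pi (shift v) <= 1) by (apply Pi_in01, in_Sigma_shift, Hv).
    pose proof (hpos _ (Hv O) _ Hy).
    assert (ln (Td (v O) (Pi (shift v))) <= ln 1).
    { apply ln_le_compat; auto. apply Td_le1; auto. }
    assert (ln c <= ln (Td (v O) (Pi (shift v)))).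
    { apply ln_le_compat; auto. }
    rewrite ln_1 in *. lra.
Qed.

Lemma gpot_small_window : exists delta, 0 < delta /\ forall w k N, in_Sigma m w ->
  (forall t, (t < S N)%nat -> gpot Td Pi (shiftn (k + t) w) < delta) ->
  I (w k) /\ forall t, (t <= S N)%nat -> w (k + t)%nat = w k.
Proof.
  destruct gpot_small as [delta [Hdelta Hsmall]].
  exists delta. split; auto. intros w k N Hw Hrun.
  assert (Hstep : forall t, (t < S N)%nat -> I (w (k + t)%nat) /\ w (S (k + t)) = w (k + t)%nat).
  { intros t Ht. exact (Hsmall _ (in_Sigma_shiftn m _ w Hw) (Hrun t Ht)). }
  split.
  - rewrite <- (Nat.add_0_r k) at 1. apply Hstep. lia.
  - induction t as [|t IH]; intros Ht; [f_equal; lia|].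
    rewrite Nat.add_succ_r, (proj2 (Hstep t ltac:(lia))). apply IH. lia.
Qed.

Variable f : (nat -> nat) -> R.
Hypothesis hf : cont_Sigma m f.

Lemma avg_limit_le nj w L c eps : 0 < eps ->
  (forall i, I i -> f (constseq i) + eps <= c) ->
  (forall j, (0 < nj j)%nat) -> (forall j, (nj j < nj (S j))%nat) -> in_Sigma m w ->
  Un_cv (fun j => avg (nj j) (gpot Td Pi) w) 0 ->
  Un_cv (fun j => avg (nj j) f w) L -> L <= c.
Proof.
  intros Heps Hc Hnj0 Hinc Hw Hg Hf.
  destruct (cont_Sigma_uniform_at_constseq m f hf eps Heps) as [N HN].
  destruct gpot_small_window as [delta [Hdelta Hrun]].
  destruct gpot_bounded as [G HG].
  destruct (cont_Sigma_bounded m f hf) as [B HB].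
  set (a := fun k => f (shiftn k w)). set (b := fun k => gpot Td Pi (shiftn k w)).
  assert (Hgood : forall k, (forall t, (t < S N)%nat -> b (k + t)%nat < delta) -> a k <= c).
  { intros k Hk. destruct (Hrun w k N Hw Hk) as [HI Hconst].
    assert (Hnear : Rabs (a k - f (constseq (w k))) < eps).
    { apply HN; [apply Hw | apply in_Sigma_shiftn, Hw |].
      intros j Hj. unfold shiftn. rewrite Nat.add_comm. apply Hconst. lia. }
    pose proof (Hc _ HI). apply Rabs_def2 in Hnear. lra. }
  set (B' := Rmax B c). set (K := (B' - c) / delta).
  assert (Hsum := psum_window_bound a b B' c G delta (S N) Hdelta (Rmax_r B c)
    (fun k => HG _ (in_Sigma_shiftn m k w Hw))
    (fun k => Rle_trans _ _ _ (HB _ (in_Sigma_shiftn m k w Hw)) (Rmax_l B c)) Hgood).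
  apply (limit_le_of_affine_bound (fun j => avg (nj j) f w)
    (fun j => avg (nj j) (gpot Td Pi) w) nj c (K * INR (S N))
    (K * (INR (S N) * (INR (S N) * G))) L Hinc); auto.
  intros j. unfold avg. rewrite !birk_sum_psum. fold a b.
  assert (Hn : 0 < INR (nj j)) by (apply lt_0_INR, Hnj0).
  replace (c + K * INR (S N) * (/ INR (nj j) * psum b (nj j))
             + K * (INR (S N) * (INR (S N) * G)) / INR (nj j))
    with (/ INR (nj j) * (INR (nj j) * c + K * (INR (S N) * (psum b (nj j) + INR (S N) * G))))
    by (field; lra).
  apply Rmult_le_compat_l; [left; apply Rinv_0_lt_compat, Hn | apply Hsum].
Qed.

Lemma avg_limit_upper nj w L :
  (forall j, (0 < nj j)%nat) -> (forall j, (nj j < nj (S j))%nat) -> in_Sigma m w ->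
  Un_cv (fun j => avg (nj j) (gpot Td Pi) w) 0 ->
  Un_cv (fun j => avg (nj j) f w) L ->
  exists i, I i /\ L <= f (constseq i).
Proof.
  intros Hnj0 Hinc Hw Hg Hf. apply NNPP. intros Hno.
  destruct (finite_pos_bound I (fun i e => f (constseq i) + 2 * e <= L) m) as [eps [Heps Hle]].
  - intros i e e' H He'. lra.
  - intros i Hi HI. exists ((L - f (constseq i)) / 2). split; [|lra].
    enough (f (constseq i) < L) by lra.
    apply Rnot_le_lt. intros HL. apply Hno. eauto.
  - enough (L <= L - eps) by lra.
    apply (avg_limit_le nj w L (L - eps) eps); auto.
    intros i HI. pose proof (Hle i (proj1 HI) HI). lra.
Qed.

End IFS.

Lemma birk_sum_opp F w n : birk_sum (fun v => - F v) w n = - birk_sum F w n.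
Proof. induction n as [|n IH]; simpl; [lra | rewrite IH; lra]. Qed.

Lemma avg_opp n F w : avg n (fun v => - F v) w = - avg n F w.
Proof. unfold avg. rewrite birk_sum_opp. ring. Qed.

Lemma cont_Sigma_opp m F : cont_Sigma m F -> cont_Sigma m (fun v => - F v).
Proof.
  intros H w Hw eps Heps. destruct (H w Hw eps Heps) as [N HN]. exists N.
  intros w' Hw' Hk. replace (- F w' - - F w) with (- (F w' - F w)) by ring.
  rewrite Rabs_Ropp. auto.
Qed.

Theorem lemma6
  (m : nat) (T Td : nat -> R -> R) (Pi : (nat -> nat) -> R) (f : (nat -> nat) -> R)
  (hmaps : forall i, (i < m)%nat -> forall x, 0 <= x <= 1 -> 0 <= T i x <= 1)
  (hderiv : forall i, (i < m)%nat -> deriv_on01 (T i) (Td i))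
  (hC1 : forall i, (i < m)%nat -> cont_on01 (Td i))
  (hpos : forall i, (i < m)%nat -> forall x, 0 <= x <= 1 -> 0 < Td i x)
  (hdisj : forall i j, (i < m)%nat -> (j < m)%nat -> i <> j ->
     forall x y, 0 < x < 1 -> 0 < y < 1 -> T i x <> T j y)
  (hdiam : forall eps, 0 < eps -> exists N : nat, forall n, (N <= n)%nat ->
     forall w, in_Sigma m w -> forall x y, 0 <= x <= 1 -> 0 <= y <= 1 ->
       Rabs (ifs_comp T w n x - ifs_comp T w n y) <= eps)
  (hPi : forall w, in_Sigma m w -> Un_cv (fun n => ifs_comp T w n 0) (Pi w))
  (hfix : forall i, (i < m)%nat -> T i (Pi (constseq i)) = Pi (constseq i))
  (hle1 : forall i, (i < m)%nat -> Td i (Pi (constseq i)) <= 1)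
  (hlt1 : forall i, (i < m)%nat -> forall x, 0 <= x <= 1 -> x <> Pi (constseq i) ->
     0 < Td i x < 1)
  (hI : exists i, indI m Td Pi i)
  (hf : cont_Sigma m f) :
  (forall (nj : nat -> nat) (w : nat -> nat) (L : R),
     (forall j, (0 < nj j)%nat) -> (forall j, (nj j < nj (S j))%nat) ->
     in_Sigma m w ->
     Un_cv (fun j => avg (nj j) (gpot Td Pi) w) 0 ->
     Un_cv (fun j => avg (nj j) f w) L ->
     inA m Td Pi f L)
  /\
  (forall (w : nat -> nat) (L : R),
     in_Sigma m w ->
     Un_cv (fun n => avg n (gpot Td Pi) w) 0 ->
     Un_cv (fun n => avg n f w) L ->
     inA m Td Pi f L).
Proof.
  assert (Hsub : forall nj w L,
     (forall j, (0 < nj j)%nat) -> (forall j, (nj j < nj (S j))%nat) -> in_Sigma m w ->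
     Un_cv (fun j => avg (nj j) (gpot Td Pi) w) 0 ->
     Un_cv (fun j => avg (nj j) f w) L -> inA m Td Pi f L).
  { intros nj w L Hnj0 Hinc Hw Hg Hf. split.
    - destruct (avg_limit_upper m T Td Pi hmaps hderiv hC1 hpos hdisj hPi hfix hle1 hlt1
        (fun v => - f v) (cont_Sigma_opp m f hf) nj w (- L) Hnj0 Hinc Hw Hg)
        as [i [HI Hle]].
      + intros eps Heps. destruct (CV_opp _ _ Hf eps Heps) as [N HN].
        exists N. intros n Hn. rewrite avg_opp. apply HN, Hn.
      + exists i. split; [exact HI | lra].
    - exact (avg_limit_upper m T Td Pi hmaps hderiv hC1 hpos hdisj hPi hfix hle1 hlt1
        f hf nj w L Hnj0 Hinc Hw Hg Hf). }
  split; [exact Hsub|].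
  intros w L Hw Hg Hf. apply (Hsub S w L); [intros; lia | intros; lia | exact Hw | |].
  - exact (Un_cv_succ _ _ Hg).
  - exact (Un_cv_succ _ _ Hf).
Qed.
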